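(* Let $(\mathcal{K},[\cdot,\cdot])$ be a Krein space with canonical decomposition $\mathcal{K}=\mathcal{K}^+\oplus\mathcal{K}^-$, and let $\{f_n\}_{n\in I}$, $I=I_+\sqcup I_-$, be a Riesz basis for $(\mathcal{K},[\cdot,\cdot])$ with $f_n=U^+e_n$ for $n\in I_+$ and $f_n=U^-e_n$ for $n\in I_-$, where $\{e_n\}_{n\in I_+}$ is an orthonormal basis of $\mathcal{K}^+$, $\{e_n\}_{n\in I_-}$ is an orthonormal basis of $\mathcal{K}^-$, and $U^+:\mathcal{K}^+\to\mathcal{K}^+$, $U^-:\mathcal{K}^-\to\mathcal{K}^-$ are bounded bijective linear operators. Then there exist positive constants $A,B,A',B'$ such that \[A\|f\|^2\le\sum_{n\in I_+}|[f,f_n]|^2\le B\|f\|^2\quad\text{for all } f\in\mathcal{K}^+\] and \[A'\|f\|^2\le\sum_{n\in I_-}|[f,f_n]|^2\le B'\|f\|^2\quad\text{for all } f\in\mathcal{K}^-.\] Moreover, the largest possible values of $A$ and $A'$ are $\frac{1}{\|(U^+)^{-1}\|^2}$ and $\frac{1}{\|(U^-)^{-1}\|^2}$ respectively, and the smallest possible values of $B$ and $B'$ are $\|U^+\|^2$ and $\|U^-\|^2$ respectively.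
   Context: A Krein space $(\mathcal{K},[\cdot,\cdot])$ is a vector space with a Hermitian sesquilinear (indefinite) form $[\cdot,\cdot]$ admitting a $[\cdot,\cdot]$-orthogonal direct sum decomposition $\mathcal{K}=\mathcal{K}^+\oplus\mathcal{K}^-$ such that $(\mathcal{K}^+,[\cdot,\cdot])$ and $(\mathcal{K}^-,-[\cdot,\cdot])$ are Hilbert spaces. The norm on $\mathcal{K}^+$ is $\|x\|=[x,x]^{1/2}$ and on $\mathcal{K}^-$ is $\|x\|=(-[x,x])^{1/2}$. Orthonormal bases, adjoints and operator norms on $\mathcal{K}^\pm$ are taken with respect to these Hilbert space structures. *)

From mathcomp Require Import all_boot all_order all_algebra.
From mathcomp Require Import all_classical all_reals all_analysis.
From mathcomp Require Export complex.
Set Implicit Arguments. Unset Strict Implicit. Unset Printing Implicit Defensive.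
Import Order.TTheory GRing.Theory Num.Theory.
Local Open Scope ring_scope.
Local Open Scope classical_set_scope.

Section KreinDefs.
Variables (R : realType) (V : lmodType R[i]).

Definition k_subspace (S : set V) : Prop :=
  S 0 /\ (forall (a : R[i]) x y, S x -> S y -> S (a *: x + y)).

Definition k_hermitian_sesquilinear (form : V -> V -> R[i]) : Prop :=
  (forall (a : R[i]) x y z, form (a *: x + y) z = a * form x z + form y z) /\
  (forall x y, form y x = (form x y)^*).

(* The norm attached to the form: sqrt |[x,x]|; on K+ this is [x,x]^(1/2),
   on K- it is (-[x,x])^(1/2). *)
Definition k_norm (form : V -> V -> R[i]) (x : V) : R := Num.sqrt (Normc.normc (form x x)).

Definition k_complete_wrt (S : set V) (nrm : V -> R) : Prop :=
  forall u : nat -> V, (forall k, S (u k)) ->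
    (forall e : R, 0 < e -> exists N, forall m n, (N <= m)%N -> (N <= n)%N ->
        nrm (u m - u n) < e) ->
    exists2 x, S x & forall e : R, 0 < e -> exists N, forall n, (N <= n)%N ->
        nrm (u n - x) < e.

Definition k_hilbert_on (S : set V) (ip : V -> V -> R[i]) : Prop :=
  k_subspace S /\ (forall x, S x -> x != 0 -> 0 < ip x x) /\ k_complete_wrt S (k_norm ip).

Definition k_krein_space (form : V -> V -> R[i]) (Kp Km : set V) : Prop :=
  k_hermitian_sesquilinear form /\
  (forall x, exists xp xm, [/\ Kp xp, Km xm & x = xp + xm]) /\
  (forall x, Kp x -> Km x -> x = 0) /\
  (forall x y, Kp x -> Km y -> form x y = 0) /\
  k_hilbert_on Kp form /\
  k_hilbert_on Km (fun x y => - form x y) /\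
  (* the form is indefinite: both components are nontrivial *)
  (exists2 x, Kp x & x != 0) /\ (exists2 x, Km x & x != 0).

Definition k_orthonormal_basis (I : eqType) (S : set V) (ip : V -> V -> R[i])
    (e : I -> V) : Prop :=
  (forall n, S (e n)) /\
  (forall n m, ip (e n) (e m) = (n == m)%:R) /\
  (forall x, S x -> (forall n, ip x (e n) = 0) -> x = 0).

Definition k_bounded_linear_on (S : set V) (nrm : V -> R) (T : V -> V) : Prop :=
  (forall x, S x -> S (T x)) /\
  (forall (a : R[i]) x y, S x -> S y -> T (a *: x + y) = a *: T x + T y) /\
  (exists c : R, forall x, S x -> nrm (T x) <= c * nrm x).

Definition k_bijective_on (S : set V) (T : V -> V) : Prop :=
  (forall x y, S x -> S y -> T x = T y -> x = y) /\
  (forall y, S y -> exists2 x, S x & T x = y).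

Definition k_inverse_on (S : set V) (T Ti : V -> V) : Prop :=
  (forall y, S y -> S (Ti y)) /\
  (forall x, S x -> Ti (T x) = x) /\ (forall y, S y -> T (Ti y) = y).

Definition k_opnorm (S : set V) (nrm : V -> R) (T : V -> V) : R :=
  sup [set r | exists2 x, S x /\ nrm x <= 1 & r = nrm (T x)].

Definition k_coef_sum (I : choiceType) (form : V -> V -> R[i]) (g : I -> V) (f : V)
  : \bar R := \esum_(n in [set: I]) ((Normc.normc (form f (g n))) ^+ 2)%:E.

Definition k_lower_bound_on (S : set V) (nrm : V -> R) (sm : V -> \bar R) (A : R) :=
  forall f, S f -> ((A * nrm f ^+ 2)%:E <= sm f)%E.
Definition k_upper_bound_on (S : set V) (nrm : V -> R) (sm : V -> \bar R) (B : R) :=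
  forall f, S f -> (sm f <= (B * nrm f ^+ 2)%:E)%E.

End KreinDefs.

(* Since [f, U e_n] = [U' f, e_n] for the adjoint U' of U, Parseval's identity
   turns the frame sum sum_n |[f, U e_n]|^2 into ||U' f||^2 on each of the Hilbert
   spaces K+ and K- (on K- the inner product is -[.,.], which has the same norm and
   the same coefficient sums).  Hence the best upper frame bound is
   ||U'||^2 = ||U||^2, and the best lower one is 1 / ||W||^2 where W = (U^-1)' is
   the inverse of U', so that ||W|| = ||U^-1||.  The inverse U^-1 is bounded by
   the bounded inverse theorem (a Baire category argument) and adjoints exist by
   the Riesz representation theorem; both, like Parseval's identity, rest on the
   completeness of K+ and K- and on expansions in the orthonormal bases. *)

From mathcomp Require Import all_boot all_order all_algebra.
From mathcomp Require Import all_classical all_reals all_analysis.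
From mathcomp Require Import complex.
From mathcomp Require Import ring lra.
Import Order.TTheory GRing.Theory Num.Theory.
Local Open Scope ring_scope.
Local Open Scope classical_set_scope.

Section ComplexNorm.
Context {R : realType}.
Implicit Types (z : R[i]) (r : R).

Lemma normcC z : (Normc.normc z)%:C%C = `|z|.
Proof. by case: z => a b; rewrite normc_def. Qed.

Lemma normc_ge0 z : 0 <= Normc.normc z.
Proof. by rewrite -(lecR 0) normcC; exact: normr_ge0. Qed.

Lemma normc_real r : 0 <= r -> Normc.normc r%:C%C = r.
Proof. by move=> r0; apply: complexI; rewrite normcC ger0_norm // lecR. Qed.

Lemma normc_sqrC z : ((Normc.normc z) ^+ 2)%:C%C = z * z^*.
Proof. by rewrite rmorphXn /= normcC normCK. Qed.

Lemma addc_conj_le z : z + z^* <= (Normc.normc z)%:C%C *+ 2.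
Proof.
have -> : z + z^* = (complex.Re z)%:C%C *+ 2 by rewrite ReJ_add -mulr_natl; field.
rewrite lerMn2r /= lecR; apply: le_trans (ler_norm _) _.
by rewrite -lecR normcC normc_ge_Re.
Qed.

End ComplexNorm.

Section RealFacts.
Context {R : realType}.
Implicit Types (c r x eps : R).

Lemma geometric_lt c eps : 0 < eps -> exists k, c / 2 ^+ k < eps.
Proof.
move=> eps0; exists (Num.truncn (c / eps)).+1.
rewrite ltr_pdivrMr ?exprn_gt0 // -ltr_pdivrMl // mulrC.
apply: lt_trans (truncnS_gt _) _.
by rewrite -natrX ltr_nat ltn_expl.
Qed.

Lemma le0_geometric r c : 0 <= r -> (forall k, r <= c / 2 ^+ k) -> r = 0.
Proof.
move=> r0 rc; apply/eqP; rewrite eq_le r0 andbT leNgt; apply/negP => rpos.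
have [k ck] := geometric_lt c r rpos.
by have := lt_le_trans ck (rc k); rewrite ltxx.
Qed.

Lemma le0_mul_eps x c : 0 <= c -> (forall eps, 0 < eps -> x <= c * eps) -> x <= 0.
Proof.
move=> c0 xc; apply/ler_addgt0Pr => eps eps0; rewrite add0r.
have c1 : 0 < c + 1 by lra.
apply: le_trans (xc (eps / (c + 1)) _) _; first by rewrite divr_gt0.
by rewrite mulrA ler_pdivrMr // mulrC ler_pM2l //; lra.
Qed.

End RealFacts.

Section NonnegSums.
Context {R : realType} {I : choiceType} {g : I -> R}.
Hypothesis g_ge0 : forall i, 0 <= g i.

Lemma sum_le_uniq_subset {s s' : seq I} : uniq s -> uniq s' -> {subset s <= s'} ->
  \sum_(i <- s) g i <= \sum_(i <- s') g i.
Proof.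
move=> us us' ss'.
have perm_s : perm_eq s [seq i <- s' | i \in s].
  apply: uniq_perm; rewrite ?filter_uniq // => i.
  by rewrite mem_filter andb_idr //; apply: ss'.
by rewrite (perm_big _ perm_s) big_filter [X in _ <= X](bigID (mem s)) /= lerDl sumr_ge0.
Qed.

Lemma esum_le_fin (c : R) : (forall s, uniq s -> \sum_(i <- s) g i <= c) ->
  (\esum_(i in [set: I]) (g i)%:E <= c%:E)%E.
Proof.
move=> gc; apply: ge_ereal_sup => _ [X [finX _] <-].
by rewrite fsbig_finite // sumEFin lee_fin gc // finmap.fset_uniq.
Qed.

Lemma sum_le_esum s : uniq s ->
  ((\sum_(i <- s) g i)%:E <= \esum_(i in [set: I]) (g i)%:E)%E.
Proof.
move=> us; apply: esum_ge; exists [set` s]; first by split => //; exact: finite_seq.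
rewrite fsbig_finite ?finite_seq // sumEFin lee_fin le_eqVlt; apply/orP; left.
apply/eqP/perm_big/uniq_perm; rewrite ?finmap.fset_uniq // => i.
rewrite (in_fset_set (finite_seq s)); apply/idP/idP => h; [exact/mem_set | exact: set_mem h].
Qed.

Lemma fin_le_esum (c : R) :
  (forall eps, 0 < eps -> exists2 s, uniq s & c - eps <= \sum_(i <- s) g i) ->
  (c%:E <= \esum_(i in [set: I]) (g i)%:E)%E.
Proof.
move=> cs; have : (0 <= \esum_(i in [set: I]) (g i)%:E)%E.
  by apply: esum_ge0 => i _; rewrite lee_fin.
case: (\esum_(i in _) _) (sum_le_esum) => [r| |] le_esum //= _; last by rewrite leey.
rewrite lee_fin; apply/ler_addgt0Pr => eps eps0; have [s us cs_eps] := cs eps eps0.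
by rewrite -lerBlDr; apply: le_trans cs_eps _; rewrite -lee_fin le_esum.
Qed.

(* Replaces the possibly uncountable index set by a countable chain of finite
   sets carrying almost all of the mass. *)
Lemma exhausting_chain {C : R} : (forall s, uniq s -> \sum_(i <- s) g i <= C) ->
  exists G : nat -> seq I, forall k, [/\ uniq (G k), exists t, G k.+1 = G k ++ t &
    forall s, uniq s -> ~~ has (mem (G k)) s -> \sum_(i <- s) g i <= (2 ^+ k)^-1 ^+ 2].
Proof.
move=> gC; pose T := [set r | exists2 s, uniq s & r = \sum_(i <- s) g i].
have supT : has_sup T.
  by split; [exists 0, [::]; rewrite ?big_nil | exists C => _ [s us ->]; apply: gC].
have near_sup k : exists s, uniq s /\ sup T - (2 ^+ k)^-1 ^+ 2 < \sum_(i <- s) g i.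
  have d_gt0 : 0 < (2 ^+ k : R)^-1 ^+ 2 by rewrite exprn_gt0 // invr_gt0 exprn_gt0.
  have [_ [s us ->] ?] := sup_adherent d_gt0 supT.
  by exists s.
have [sk /all_and2[usk sk_sup]] := choice near_sup.
pose fix G k := if k is k'.+1 then G k' ++ [seq i <- sk k | i \notin G k'] else sk 0%N.
have uG k : uniq (G k).
  elim: k => [|k IH] //=; rewrite cat_uniq IH filter_uniq // andbT.
  by apply/hasPn => i; rewrite mem_filter => /andP[].
have skG k : {subset sk k <= G k}.
  by case: k => [|k] i //= ski; rewrite mem_cat mem_filter ski andbT orbN.
exists G => k; split => //; first by exists [seq i <- sk k.+1 | i \notin G k].
move=> s us sG.
have /(sup_upper_bound supT) : T (\sum_(i <- G k ++ s) g i).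
  by exists (G k ++ s) => //; rewrite cat_uniq uG us sG.
have := sum_le_uniq_subset (usk k) (uG k) (skG k).
by rewrite big_cat /=; have := sk_sup k; lra.
Qed.

End NonnegSums.

Section Subspace.
Context {R : realType} {V : lmodType R[i]} {S : set V}.
Hypothesis S_subspace : k_subspace S.

Lemma subspace0 : S 0.
Proof. by case: S_subspace. Qed.

Lemma subspaceD {x y} : S x -> S y -> S (x + y).
Proof. by case: S_subspace => _ SL Sx Sy; rewrite -[x]scale1r; apply: SL. Qed.

Lemma subspaceZ a {x} : S x -> S (a *: x).
Proof. by case: S_subspace => S0 SL Sx; rewrite -[_ *: _]addr0; apply: SL. Qed.

Lemma subspaceB {x y} : S x -> S y -> S (x - y).
Proof. by case: S_subspace => _ SL Sx Sy; rewrite -scaleN1r addrC; apply: SL. Qed.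

Lemma subspace_sum (J : Type) (s : seq J) (F : J -> V) :
  (forall j, S (F j)) -> S (\sum_(j <- s) F j).
Proof.
move=> SF; elim: s => [|j s IH]; first by rewrite big_nil; apply: subspace0.
by rewrite big_cons; apply: subspaceD.
Qed.

End Subspace.

Section LinearOn.
Context {R : realType} {V W : lmodType R[i]} {S : set V} {f : V -> W}.
Hypothesis S_subspace : k_subspace S.
Hypothesis f_linear : forall a x y, S x -> S y -> f (a *: x + y) = a *: f x + f y.

Lemma linear_on0 : f 0 = 0.
Proof.
have := f_linear 1 0 0 (subspace0 S_subspace) (subspace0 S_subspace).
by rewrite scale1r addr0 scale1r => /eqP; rewrite addrC -subr_eq subrr eq_sym => /eqP.
Qed.

Lemma linear_onD {x y} : S x -> S y -> f (x + y) = f x + f y.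
Proof. by move=> Sx Sy; have := f_linear 1 x y Sx Sy; rewrite !scale1r. Qed.

Lemma linear_onZ a {x} : S x -> f (a *: x) = a *: f x.
Proof.
by move=> Sx; have := f_linear a x 0 Sx (subspace0 S_subspace); rewrite !addr0 linear_on0 addr0.
Qed.

Lemma linear_onB {x y} : S x -> S y -> f (x - y) = f x - f y.
Proof.
move=> Sx Sy; have SNy := subspaceZ S_subspace (-1) Sy.
by rewrite -scaleN1r linear_onD // linear_onZ // scaleN1r.
Qed.

Lemma linear_on_sum (J : Type) (s : seq J) (F : J -> V) : (forall j, S (F j)) ->
  f (\sum_(j <- s) F j) = \sum_(j <- s) f (F j).
Proof.
move=> SF; elim: s => [|j s IH]; first by rewrite !big_nil linear_on0.
by rewrite !big_cons linear_onD ?IH //; apply: subspace_sum.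
Qed.

End LinearOn.

Section InnerProduct.
Context {R : realType} {V : lmodType R[i]} {ip : V -> V -> R[i]} {S : set V}.
Hypothesis ip_herm : k_hermitian_sesquilinear ip.
Hypothesis S_subspace : k_subspace S.
Hypothesis ip_pos : forall x, S x -> x != 0 -> 0 < ip x x.

Local Notation N := (k_norm ip).

Let ipL : forall a x y z, ip (a *: x + y) z = a * ip x z + ip y z := ip_herm.1.
Let ipC : forall x y, ip y x = (ip x y)^* := ip_herm.2.

Lemma ip0l z : ip 0 z = 0.
Proof.
have := ipL 1 0 0 z; rewrite scale1r addr0 mul1r => /eqP.
by rewrite addrC -subr_eq subrr eq_sym => /eqP.
Qed.

Lemma ipDl x y z : ip (x + y) z = ip x z + ip y z.
Proof. by rewrite -{1}[x]scale1r ipL mul1r. Qed.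

Lemma ipZl a x z : ip (a *: x) z = a * ip x z.
Proof. by rewrite -[a *: x]addr0 ipL ip0l addr0. Qed.

Lemma ipBl x y z : ip (x - y) z = ip x z - ip y z.
Proof. by rewrite ipDl -scaleN1r ipZl mulN1r. Qed.

Lemma ip0r z : ip z 0 = 0.
Proof. by rewrite ipC ip0l conjC0. Qed.

Lemma ipZr a x z : ip z (a *: x) = a^* * ip z x.
Proof. by rewrite !(ipC _ z) ipZl rmorphM. Qed.

Lemma ipBr x y z : ip z (x - y) = ip z x - ip z y.
Proof. by rewrite !(ipC _ z) ipBl rmorphB. Qed.

Lemma ipDr x y z : ip z (x + y) = ip z x + ip z y.
Proof. by rewrite !(ipC _ z) ipDl rmorphD. Qed.

Lemma ip_suml (J : Type) (s : seq J) (F : J -> V) z :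
  ip (\sum_(j <- s) F j) z = \sum_(j <- s) ip (F j) z.
Proof. by elim: s => [|j s IH]; rewrite ?big_nil ?ip0l // !big_cons ipDl IH. Qed.

Lemma ip_sumr (J : Type) (s : seq J) (F : J -> V) z :
  ip z (\sum_(j <- s) F j) = \sum_(j <- s) ip z (F j).
Proof. by elim: s => [|j s IH]; rewrite ?big_nil ?ip0r // !big_cons ipDr IH. Qed.

Lemma ipxx_ge0 {x} : S x -> 0 <= ip x x.
Proof. by have [->|x0] := eqVneq x 0; [rewrite ip0l | move=> Sx; exact/ltW/ip_pos]. Qed.

Lemma knorm_ge0 x : 0 <= N x.
Proof. exact: sqrtr_ge0. Qed.

Lemma knorm_sqrC {x} : S x -> (N x ^+ 2)%:C%C = ip x x.
Proof.
by move=> Sx; rewrite sqr_sqrtr ?normc_ge0 // normcC ger0_norm // ipxx_ge0.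
Qed.

Lemma knorm0 : N 0 = 0.
Proof. by rewrite /k_norm ip0l Normc.normc0 sqrtr0. Qed.

Lemma knorm_gt0 {x} : S x -> x != 0 -> 0 < N x.
Proof.
move=> Sx x0; rewrite lt_def knorm_ge0 andbT; apply/eqP => Nx0.
by have := ip_pos _ Sx x0; rewrite -knorm_sqrC // Nx0 expr0n ltxx.
Qed.

Lemma knorm_eq0 {x} : S x -> N x = 0 -> x = 0.
Proof.
move=> Sx Nx0; apply/eqP; apply: contraT => x0.
by have := knorm_gt0 Sx x0; rewrite Nx0 ltxx.
Qed.

Lemma cauchy_schwarz {x y} : S x -> S y -> Normc.normc (ip x y) <= N x * N y.
Proof.
move=> Sx Sy; rewrite -(@ler_pXn2r _ 2) ?nnegrE ?normc_ge0 ?mulr_ge0 ?knorm_ge0 //.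
rewrite -lecR normc_sqrC exprMn rmorphM /= !knorm_sqrC //.
have [->|y0] := eqVneq y 0; first by rewrite !(ip0r, ip0l) mul0r mulr0.
set B := ip y y; set c := ip x y; have B_gt0 : 0 < B by apply: ip_pos.
have B_real : B^* = B by apply/CrealP; rewrite realE ltW.
pose t := c / B.
(* Expand 0 <= [x - t y, x - t y]. *)
have := ipxx_ge0 (subspaceB S_subspace Sx (subspaceZ S_subspace t Sy)).
rewrite !(ipBl, ipBr, ipZl, ipZr) -/B -/c (ipC x y) -/c.
have -> : ip x x - t^* * c - t * (c^* - t^* * B) = ip x x - c * c^* / B.
  by rewrite /t rmorphM rmorphV ?unitfE ?gt_eqF //= B_real; field; rewrite gt_eqF.
by rewrite subr_ge0 ler_pdivrMr // mulrC.
Qed.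

Lemma knormZ a {x} : S x -> N (a *: x) = Normc.normc a * N x.
Proof.
move=> Sx; apply/eqP; rewrite -(@eqrXn2 _ 2) ?mulr_ge0 ?normc_ge0 ?knorm_ge0 //.
have Sax := subspaceZ S_subspace a Sx.
apply/eqP/complexI; rewrite knorm_sqrC // exprMn rmorphM /= knorm_sqrC //.
by rewrite ipZl ipZr normc_sqrC mulrA.
Qed.

Lemma knormZr (r : R) {x} : 0 <= r -> S x -> N (r%:C%C *: x) = r * N x.
Proof. by move=> r0 Sx; rewrite knormZ // normc_real. Qed.

Lemma knorm_distC {x y} : S x -> S y -> N (x - y) = N (y - x).
Proof.
move=> Sx Sy; have Syx := subspaceB S_subspace Sy Sx.
have -> : x - y = (-1) *: (y - x) by rewrite scaleN1r opprB.
by rewrite knormZ // normcN Normc.normc1 mul1r.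
Qed.

Lemma knormD {x y} : S x -> S y -> N (x + y) <= N x + N y.
Proof.
move=> Sx Sy; have Sxy := subspaceD S_subspace Sx Sy.
rewrite -(@ler_pXn2r _ 2) ?nnegrE ?addr_ge0 ?knorm_ge0 // -lecR knorm_sqrC //.
have -> : ((N x + N y) ^+ 2)%:C%C = ip x x + ip y y + (N x * N y)%:C%C *+ 2.
  by rewrite -!knorm_sqrC // -rmorphMn -!rmorphD sqrrD addrAC.
rewrite !(ipDl, ipDr) (ipC x y).
have -> : ip x x + ip x y + ((ip x y)^* + ip y y) =
  ip x x + ip y y + (ip x y + (ip x y)^*) by ring.
rewrite lerD2l.
apply: le_trans (addc_conj_le _) _.
by rewrite lerMn2r /= lecR cauchy_schwarz.
Qed.

Lemma knormB {x y} : S x -> S y -> N (x - y) <= N x + N y.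
Proof.
move=> Sx Sy; have SNy := subspaceZ S_subspace (-1) Sy.
by rewrite -[N y]mul1r -(Normc.normc1 R) -normcN -knormZ // scaleN1r knormD // -scaleN1r.
Qed.

Lemma knorm_sub_le {x y z} : S x -> S y -> S z -> N (x - z) <= N (x - y) + N (y - z).
Proof.
move=> Sx Sy Sz; have -> : x - z = (x - y) + (y - z) by rewrite addrA subrK.
by apply: knormD; apply: subspaceB.
Qed.

Lemma knormD_orth {x y} : S x -> S y -> ip x y = 0 ->
  N (x + y) ^+ 2 = N x ^+ 2 + N y ^+ 2.
Proof.
move=> Sx Sy xy0; have Sxy := subspaceD S_subspace Sx Sy.
apply: complexI; rewrite rmorphD /= !knorm_sqrC //.
by rewrite ipDl !ipDr xy0 (ipC x y) xy0 conjC0 addr0 add0r.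
Qed.

Lemma ip_eq_on u v : S u -> S v -> (forall x, S x -> ip x u = ip x v) -> u = v.
Proof.
move=> Su Sv uv; have Suv := subspaceB S_subspace Su Sv.
apply/eqP; rewrite -subr_eq0; apply/eqP/(knorm_eq0 Suv).
have : (N (u - v) ^+ 2)%:C%C = 0%:C%C by rewrite knorm_sqrC // ipBr !uv // subrr.
by move/complexI/eqP; rewrite expf_eq0 => /eqP.
Qed.

Hypothesis S_complete : k_complete_wrt S N.

Section GeometricSequences.
Context {u : nat -> V} {d : nat -> R}.
Hypothesis u_in : forall j, S (u j).
Hypothesis d_half : forall j, d j.+1 <= d j / 2.
Hypothesis u_step : forall j, N (u j.+1 - u j) <= d j.

Lemma geometric_tail {j n} : (j <= n)%N -> N (u n - u j) <= 2 * d j.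
Proof.
have d_ge0 k : 0 <= d k by apply: le_trans (u_step k); apply: knorm_ge0.
have tail i : N (u (j + i)%N - u j) <= 2 * d j - 2 * d (j + i)%N.
  elim: i => [|i IH]; first by rewrite addn0 subrr knorm0 subrr.
  apply: le_trans (knorm_sub_le (u_in _) (u_in (j + i)%N) (u_in _)) _.
  by rewrite addnS; have := u_step (j + i)%N; have := d_half (j + i)%N; lra.
by move=> /subnKC <-; apply: le_trans (tail _) _; rewrite lerBlDr lerDl mulr_ge0.
Qed.

Lemma halving_geometric j : d j <= d 0%N / 2 ^+ j.
Proof.
elim: j => [|j IH]; first by rewrite expr0 divr1.
apply: le_trans (d_half j) _.
by rewrite exprS invfM mulrA [X in _ <= X]mulrAC ler_pM2r // invr_gt0.
Qed.

Lemma geometric_cvg : exists2 y, S y & forall j, N (u j - y) <= 2 * d j.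
Proof.
have [y Sy u_cvg] : exists2 y, S y & forall eps, 0 < eps ->
    exists M, forall n, (M <= n)%N -> N (u n - y) < eps.
  apply: S_complete => // eps eps0; have [k dk] := geometric_lt (4 * d 0%N) eps eps0.
  exists k => m n km kn; apply: le_lt_trans (knorm_sub_le (u_in m) (u_in k) (u_in n)) _.
  rewrite (knorm_distC (u_in k)) //; apply: le_lt_trans dk.
  have := geometric_tail km; have := geometric_tail kn; have := halving_geometric k.
  by rewrite -mulrA; lra.
exists y => // j; apply/ler_addgt0Pr => eps eps0; have [M uM] := u_cvg eps eps0.
have := uM _ (leq_maxl M j); have := geometric_tail (leq_maxr M j).
rewrite (knorm_distC (u_in _)) // => h1 h2.
by apply: le_trans (knorm_sub_le (u_in j) (u_in (maxn M j)) Sy) _; lra.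
Qed.

End GeometricSequences.

Section OperatorNorm.
Context {T : V -> V}.
Hypothesis T_bounded : k_bounded_linear_on S N T.

Let T_in : forall x, S x -> S (T x) := T_bounded.1.
Let T_linear : forall a x y, S x -> S y -> T (a *: x + y) = a *: T x + T y := T_bounded.2.1.

Let unit_ball_image := [set r | exists2 x, S x /\ N x <= 1 & r = N (T x)].

Let unit_ball_image0 : unit_ball_image 0.
Proof.
exists 0; last by rewrite (linear_on0 S_subspace T_linear) knorm0.
by rewrite knorm0 ler01; split => //; apply: subspace0.
Qed.

Let unit_ball_image_has_sup : has_sup unit_ball_image.
Proof.
split; first by exists 0; apply: unit_ball_image0.
have [_ [_ [c Tc]]] := T_bounded; exists `|c| => _ [x [Sx Nx1] ->].
apply: le_trans (Tc _ Sx) _; apply: le_trans (ler_wpM2r (knorm_ge0 _) (ler_norm c)) _.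
by rewrite ler_piMr.
Qed.

Lemma opnorm_ge0 : 0 <= k_opnorm S N T.
Proof. exact: sup_upper_bound unit_ball_image_has_sup _ unit_ball_image0. Qed.

Lemma knorm_op_le {x} : S x -> N (T x) <= k_opnorm S N T * N x.
Proof.
move=> Sx; have [->|x0] := eqVneq x 0.
  by rewrite (linear_on0 S_subspace T_linear) knorm0 mulr0.
have Nx_gt0 := knorm_gt0 Sx x0; have Nx_inv_ge0 : 0 <= (N x)^-1 by rewrite invr_ge0 ltW.
have Sax := subspaceZ S_subspace ((N x)^-1)%:C%C Sx.
have : unit_ball_image (N (T (((N x)^-1)%:C%C *: x))).
  by exists (((N x)^-1)%:C%C *: x) => //; split => //; rewrite knormZr // mulVf ?gt_eqF.
move/(sup_upper_bound unit_ball_image_has_sup).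
rewrite (linear_onZ S_subspace T_linear) // knormZr //; last exact: T_in.
by rewrite -/(k_opnorm S N T) ler_pdivrMl // mulrC.
Qed.

End OperatorNorm.

Lemma opnorm_le (T : V -> V) (c : R) : 0 <= c ->
  (forall x, S x -> N (T x) <= c * N x) -> k_opnorm S N T <= c.
Proof.
move=> c0 Tc; apply: ge_sup.
  by exists (N (T 0)), 0; rewrite ?knorm0 ?ler01 //; split => //; apply: subspace0.
move=> _ [x [Sx Nx1] ->]; apply: le_trans (Tc _ Sx) _.
by rewrite ler_piMr.
Qed.

Lemma opnorm_gt0 (T : V -> V) : k_bounded_linear_on S N T ->
  (exists2 x, S x & T x != 0) -> 0 < k_opnorm S N T.
Proof.
move=> T_bounded [x Sx Tx0]; rewrite lt_def opnorm_ge0 // andbT.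
apply: contra_neq Tx0 => opT0; apply: knorm_eq0; first exact: T_bounded.1.
by apply/eqP; rewrite eq_le knorm_ge0 andbT; have := knorm_op_le T_bounded Sx; rewrite opT0 mul0r.
Qed.

Definition adjoint_on (T Ts : V -> V) :=
  (forall y, S y -> S (Ts y)) /\ forall x y, S x -> S y -> ip (T x) y = ip x (Ts y).

Lemma adjoint_on_sym {T Ts} : (forall x, S x -> S (T x)) -> adjoint_on T Ts -> adjoint_on Ts T.
Proof.
move=> T_in [Ts_in TTs]; split => // x y Sx Sy.
by rewrite ipC -TTs // -ipC.
Qed.

Section Adjoint.
Context {T Ts : V -> V}.
Hypotheses (T_bounded : k_bounded_linear_on S N T) (T_adjoint : adjoint_on T Ts).

(* ||T^* y||^2 = [T T^* y, y] <= ||T|| ||T^* y|| ||y||. *)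
Lemma knorm_adjoint_le y : S y -> N (Ts y) <= k_opnorm S N T * N y.
Proof.
have [Ts_in TTs] := T_adjoint; move=> Sy; have STsy := Ts_in _ Sy.
have STTsy := T_bounded.1 _ STsy.
have sq : N (Ts y) ^+ 2 <= k_opnorm S N T * N (Ts y) * N y.
  rewrite -[N (Ts y) ^+ 2]normc_real ?exprn_ge0 ?knorm_ge0 // knorm_sqrC // -TTs //.
  apply: le_trans (cauchy_schwarz STTsy Sy) _.
  by rewrite ler_wpM2r ?knorm_ge0 // knorm_op_le.
have [->|Tsy0] := eqVneq (Ts y) 0; first by rewrite knorm0 mulr_ge0 ?opnorm_ge0 ?knorm_ge0.
rewrite -(ler_pM2l (knorm_gt0 STsy Tsy0)) -expr2; apply: le_trans sq _.
by rewrite [X in _ <= X]mulrCA mulrA.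
Qed.

Lemma adjoint_bounded : k_bounded_linear_on S N Ts.
Proof.
have [Ts_in TTs] := T_adjoint; split => //; split; last first.
  by exists (k_opnorm S N T); apply: knorm_adjoint_le.
move=> a x y Sx Sy; have STsx := Ts_in _ Sx; have STsy := Ts_in _ Sy.
have Saxy : S (a *: x + y) by case: S_subspace => _; apply.
apply: ip_eq_on => [||z Sz]; first exact: Ts_in.
  by apply: subspaceD => //; apply: subspaceZ.
by rewrite -TTs // ipDr ipZr ipDr ipZr -!TTs.
Qed.

End Adjoint.

Lemma opnorm_adjoint {T Ts} : k_bounded_linear_on S N T -> adjoint_on T Ts ->
  k_opnorm S N Ts = k_opnorm S N T.
Proof.
move=> T_bounded T_adjoint; have Ts_bounded := adjoint_bounded T_bounded T_adjoint.
have Ts_adjoint := adjoint_on_sym T_bounded.1 T_adjoint.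
apply/eqP; rewrite eq_le; apply/andP; split; apply: opnorm_le; rewrite ?opnorm_ge0 //.
  exact: knorm_adjoint_le.
exact: knorm_adjoint_le.
Qed.

Lemma adjoint_inverse {U Ui Us Uis} : (forall x, S x -> S (U x)) -> k_inverse_on S U Ui ->
  adjoint_on U Us -> adjoint_on Ui Uis -> k_inverse_on S Us Uis.
Proof.
move=> U_in [Ui_in [UiU UUi]] [Us_in UUs] [Uis_in UiUis]; split => //; split => y Sy.
  apply: ip_eq_on => [||x Sx]; [exact/Uis_in/Us_in | by [] |].
  by rewrite -(UiUis _ _ Sx (Us_in _ Sy)) -(UUs _ _ (Ui_in _ Sx) Sy) UUi.
apply: ip_eq_on => [||x Sx]; [exact/Us_in/Uis_in | by [] |].
by rewrite -(UUs _ _ Sx (Uis_in _ Sy)) -(UiUis _ _ (U_in _ Sx) Sy) UiU.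
Qed.

Lemma inverse_on_sym {W Wi} : (forall x, S x -> S (W x)) -> k_inverse_on S W Wi ->
  k_inverse_on S Wi W.
Proof. by move=> W_in [Wi_in [WiW WWi]]. Qed.

Hypothesis S_nontrivial : exists2 x, S x & x != 0.

Lemma opnorm_gt0_inverse {W Wi} : k_bounded_linear_on S N W -> k_inverse_on S W Wi ->
  0 < k_opnorm S N W.
Proof.
move=> W_bounded [Wi_in [_ WWi]]; apply: opnorm_gt0 => //.
by have [x Sx x0] := S_nontrivial; exists (Wi x); rewrite ?WWi //; apply: Wi_in.
Qed.

Lemma sqr_upper_bound_iff {W} (B : R) : k_bounded_linear_on S N W ->
  (forall f, S f -> N (W f) ^+ 2 <= B * N f ^+ 2) <-> k_opnorm S N W ^+ 2 <= B.
Proof.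
move=> W_bounded; split => [WB|WB f Sf].
  have B0 : 0 <= B.
    have [x Sx x0] := S_nontrivial; have := le_trans (exprn_ge0 2 (knorm_ge0 _)) (WB x Sx).
    by rewrite pmulr_lge0 // exprn_gt0 // knorm_gt0.
  rewrite -(sqr_sqrtr B0) ler_pXn2r ?nnegrE ?sqrtr_ge0 ?opnorm_ge0 //.
  apply: opnorm_le (sqrtr_ge0 _) _ => f Sf.
  by rewrite -(@ler_pXn2r _ 2) ?nnegrE ?mulr_ge0 ?sqrtr_ge0 ?knorm_ge0 // exprMn (sqr_sqrtr B0) WB.
apply: le_trans (_ : (k_opnorm S N W * N f) ^+ 2 <= _).
  by rewrite ler_pXn2r ?nnegrE ?mulr_ge0 ?opnorm_ge0 ?knorm_ge0 // knorm_op_le.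
by rewrite exprMn ler_wpM2r ?exprn_ge0 ?knorm_ge0.
Qed.

Lemma sqr_lower_bound_iff {W Wi} (A : R) : k_bounded_linear_on S N W ->
  k_bounded_linear_on S N Wi -> k_inverse_on S W Wi ->
  (forall f, S f -> A * N f ^+ 2 <= N (W f) ^+ 2) <-> A <= k_opnorm S N Wi ^- 2.
Proof.
move=> W_bounded Wi_bounded W_inverse; have [Wi_in [WiW WWi]] := W_inverse.
have o_gt0 := opnorm_gt0_inverse Wi_bounded (inverse_on_sym W_bounded.1 W_inverse).
split => [AW|Ao f Sf].
  have [A0|A_gt0] := leP A 0; first by apply: le_trans A0 _; rewrite invr_ge0 exprn_ge0 ?ltW.
  have Ai0 : 0 <= A^-1 by rewrite invr_ge0 ltW.
  have o_le : k_opnorm S N Wi <= Num.sqrt A^-1.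
    apply: opnorm_le (sqrtr_ge0 _) _ => y Sy.
    rewrite -(@ler_pXn2r _ 2) ?nnegrE ?mulr_ge0 ?sqrtr_ge0 ?knorm_ge0 //.
    rewrite exprMn (sqr_sqrtr Ai0) ler_pdivlMl // -{2}(WWi y) //.
    by apply/AW/Wi_in.
  have o2 : k_opnorm S N Wi ^+ 2 <= A^-1.
    by rewrite -(sqr_sqrtr Ai0) ler_pXn2r ?nnegrE ?sqrtr_ge0 ?(ltW o_gt0).
  by rewrite -[A]invrK ler_pV2 ?inE ?unitfE ?gt_eqF ?exprn_gt0 ?invr_gt0.
have Nf : N f <= k_opnorm S N Wi * N (W f).
  by rewrite -{1}(WiW f) //; have := knorm_op_le Wi_bounded (W_bounded.1 _ Sf).
apply: le_trans (ler_wpM2r (exprn_ge0 2 (knorm_ge0 _)) Ao) _.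
by rewrite ler_pdivrMl ?exprn_gt0 // -exprMn ler_pXn2r ?nnegrE ?mulr_ge0 ?opnorm_ge0 ?knorm_ge0.
Qed.

Section Baire.
Variable P : nat -> V -> Prop.
Hypothesis P_closed : forall n y, S y -> ~ P n y ->
  exists2 r, 0 < r & forall z, S z -> N (z - y) < r -> ~ P n z.

Lemma closed_ball_avoiding n :
  (forall a r, S a -> 0 < r -> exists2 y, S y /\ N (y - a) < r & ~ P n y) ->
  forall a r, S a -> 0 < r -> exists b r',
    [/\ S b, 0 < r', r' <= r / 2, N (b - a) < r / 2 &
     forall z, S z -> N (z - b) <= r' -> ~ P n z].
Proof.
move=> no_ball a r Sa r0.
have [y [Sy ya] nPy] := no_ball a (r / 2) Sa (divr_gt0 r0 (ltr0Sn _ 1)).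
have [r1 r1_gt0 r1_avoid] := P_closed _ _ Sy nPy.
exists y, (Num.min r1 r / 2); split => //.
- by rewrite divr_gt0 // lt_min r1_gt0.
- by rewrite ler_pM2r // ge_min lexx orbT.
- move=> z Sz zy; apply: r1_avoid => //; apply: le_lt_trans zy _.
  have : Num.min r1 r <= r1 by rewrite ge_min lexx.
  lra.
Qed.

Lemma baire_category : (forall y, S y -> exists n, P n y) ->
  exists n y0 r, [/\ S y0, 0 < r & forall y, S y -> N (y - y0) < r -> P n y].
Proof.
(* Otherwise nested closed balls avoiding P 0, P 1, ... shrink to a point lying
   in no P n. *)
move=> P_cover; apply/not_existsP => no_ball.
have shrink n := closed_ball_avoiding n.
have step (p : nat * (V * R)) : exists q : V * R, S p.2.1 /\ 0 < p.2.2 ->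
    [/\ S q.1, 0 < q.2, q.2 <= p.2.2 / 2, N (q.1 - p.2.1) < p.2.2 / 2 &
     forall z, S z -> N (z - q.1) <= q.2 -> ~ P p.1 z].
  case: p => n [a r] /=; have [Sa|] := pselect (S a); last by exists (a, r) => -[].
  have [r0|] := pselect (0 < r); last by exists (a, r) => -[].
  have [|b [r' ?]] := shrink n _ a r Sa r0; last by exists (b, r').
  move=> c rc Sc rc0; apply: contrapT => allP; apply: (no_ball n); exists c, rc.
  by split => // y Sy yc; apply: contrapT => nPy; apply: allP; exists y.
have [f f_step] := choice step.
pose fix ball k := if k is k'.+1 then f (k', ball k') else ((0 : V), (1 : R)).
have ball_ok k : S (ball k).1 /\ 0 < (ball k).2.
  elim: k => [|k [Sb rb]]; first by split; [apply: subspace0 | apply: ltr01].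
  by have [] := f_step (k, ball k) (conj Sb rb).
have [y Sy y_lim] : exists2 y, S y & forall k, N ((ball k).1 - y) <= 2 * ((ball k).2 / 2).
  apply: geometric_cvg => [k|k|k]; first by case: (ball_ok k).
    by have [_ _ + _ _] := f_step (k, ball k) (ball_ok k); rewrite /= mulrAC; lra.
  by have [_ _ _ + _] := f_step (k, ball k) (ball_ok k) => /ltW.
have [n Pny] := P_cover y Sy.
have [Sb _ _ _ avoid] := f_step (n, ball n) (ball_ok n).
apply: (avoid y Sy) => //; rewrite knorm_distC //.
by have := y_lim n.+1; rewrite mulrC divfK.
Qed.

End Baire.

Section BoundedInverse.
Context {U Ui : V -> V}.
Hypothesis U_bounded : k_bounded_linear_on S N U.

Let U_in : forall x, S x -> S (U x) := U_bounded.1.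
Let U_linear : forall a x y, S x -> S y -> U (a *: x + y) = a *: U x + U y := U_bounded.2.1.

Lemma exact_preimage {K : R} : 0 <= K ->
  (forall z, S z -> exists2 v, S v /\ N v <= K * N z & N (z - U v) <= N z / 2) ->
  forall y, S y -> exists2 q, S q & U q = y /\ N q <= 2 * K * N y.
Proof.
move=> K0 approx.
have approx_total z : exists v, S z -> S v /\ N v <= K * N z /\ N (z - U v) <= N z / 2.
  have [Sz|] := pselect (S z); last by exists z.
  by have [v [Sv Nv] zv] := approx z Sz; exists v.
have [g g_approx] := choice approx_total.
(* (st j).1 is the residual and (st j).2 the partial preimage. *)
move=> y Sy; pose fix st j := if j is j'.+1
  then ((st j').1 - U (g (st j').1), (st j').2 + g (st j').1) else (y, (0 : V)).
have st_ok j : [/\ S (st j).1, S (st j).2, N (st j).1 <= N y / 2 ^+ j &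
    (st j).1 = y - U (st j).2].
  elim: j => [|j [Sr Sq r_le r_eq]] /=.
    rewrite expr0 divr1 (linear_on0 S_subspace U_linear) subr0.
    by split => //; apply: subspace0.
  have [Sg [_ g_half]] := g_approx _ Sr; split.
  - by apply: subspaceB => //; apply: U_in.
  - by have := subspaceD S_subspace Sq Sg.
  - by apply: le_trans g_half _; rewrite exprS invfM mulrA mulrAC ler_pM2r ?invr_gt0.
  - by rewrite (linear_onD U_linear Sq Sg) opprD addrA r_eq.
pose d j := K * (N y / 2 ^+ j).
have [q Sq q_lim] : exists2 q, S q & forall j, N ((st j).2 - q) <= 2 * d j.
  apply: geometric_cvg => j; first by case: (st_ok j).
    by rewrite /d exprS invfM !mulrA [X in X <= _]mulrAC.
  have [Sr _ r_le _] := st_ok j; have [_ [g_le _]] := g_approx _ Sr.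
  by rewrite /= addrAC subrr add0r; apply: le_trans g_le _; apply: ler_wpM2l.
exists q => //; split; last first.
  have := q_lim 0%N; rewrite /= (knorm_distC (subspace0 S_subspace) Sq) subr0.
  by rewrite /d expr0 divr1 mulrA.
apply/eqP; rewrite eq_sym -subr_eq0; apply/eqP/knorm_eq0.
  by apply: subspaceB => //; apply: U_in.
apply: (@le0_geometric _ _ (N y + k_opnorm S N U * (2 * K * N y)) (knorm_ge0 _)) => j.
have [Sr Sqj r_le r_eq] := st_ok j; have Sqq := subspaceB S_subspace Sqj Sq.
have -> : y - U q = (st j).1 + U ((st j).2 - q).
  by rewrite (linear_onB S_subspace U_linear) // r_eq addrA subrK.
apply: le_trans (knormD Sr (U_in _ Sqq)) _.
have := ler_wpM2l (opnorm_ge0 U_bounded) (q_lim j); have := knorm_op_le U_bounded Sqq.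
by rewrite /d; lra.
Qed.

Let near_image (n : nat) (y : V) :=
  forall eps, 0 < eps -> exists2 v, S v /\ N v <= n%:R & N (y - U v) < eps.

Let near_image_closed n y : S y -> ~ near_image n y ->
  exists2 r, 0 < r & forall z, S z -> N (z - y) < r -> ~ near_image n z.
Proof.
move=> Sy nPy; have [eps eps0 far] : exists2 eps, 0 < eps &
    forall v, S v -> N v <= n%:R -> eps <= N (y - U v).
  apply: contrapT => near; apply: nPy => eps eps0; apply: contrapT => nv; apply: near.
  by exists eps => // v Sv Nv; rewrite leNgt; apply/negP => yv; apply: nv; exists v.
exists (eps / 2); first by rewrite divr_gt0.
move=> z Sz zy Pz; have [v [Sv Nv] zv] := Pz (eps / 2) (divr_gt0 eps0 (ltr0Sn _ 1)).
have := far v Sv Nv; have := knorm_sub_le Sy Sz (U_in _ Sv).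
by rewrite (knorm_distC Sy Sz); lra.
Qed.

Hypothesis Ui_inverse : k_inverse_on S U Ui.

Let near_image_ball : exists n y0 r, [/\ S y0, 0 < r &
  forall z, S z -> N z < r -> forall eps, 0 < eps ->
    exists2 v, S v /\ N v <= 2 * n%:R & N (z - U v) < eps].
Proof.
have [Ui_in [UiU UUi]] := Ui_inverse.
have [|n [y0 [r [Sy0 r0 ball_near]]]] := @baire_category near_image near_image_closed.
  move=> y Sy; exists (Num.truncn (N (Ui y))).+1 => eps eps0; exists (Ui y).
    by split; [exact: Ui_in | exact/ltW/truncnS_gt].
  by rewrite UUi // subrr knorm0.
exists n, y0, r; split => // z Sz Nz eps eps0.
have Szy0 := subspaceD S_subspace Sz Sy0; have eps2 : 0 < eps / 2 by rewrite divr_gt0.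
have [|v1 [Sv1 Nv1] zv1] := ball_near (z + y0) Szy0 _ _ eps2.
  by rewrite -addrA subrr addr0.
have [|v2 [Sv2 Nv2] yv2] := ball_near y0 Sy0 _ _ eps2; first by rewrite subrr knorm0.
exists (v1 - v2); first by split; [exact: subspaceB | apply: le_trans (knormB Sv1 Sv2) _; lra].
have -> : z - U (v1 - v2) = (z + y0 - U v1) - (y0 - U v2).
  rewrite (linear_onB S_subspace U_linear) // opprB addrA opprB addrA (addrAC z y0).
  by rewrite [X in X - y0]addrAC addrK addrAC.
have S1 : S (z + y0 - U v1) by apply: subspaceB => //; apply: U_in.
have S2 : S (y0 - U v2) by apply: subspaceB => //; apply: U_in.
by apply: le_lt_trans (knormB S1 S2) _; lra.
Qed.

Lemma approx_preimage : exists2 K, 0 <= K &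
  forall z, S z -> exists2 v, S v /\ N v <= K * N z & N (z - U v) <= N z / 2.
Proof.
have [n [y0 [r [_ r0 small]]]] := near_image_ball.
exists (4 * n%:R / r); first by rewrite divr_ge0 ?mulr_ge0 ?ler0n ?ltW.
move=> z Sz; have [->|z0] := eqVneq z 0.
  exists 0; first by split; [apply: subspace0 | rewrite knorm0 mulr0].
  by rewrite (linear_on0 S_subspace U_linear) subrr knorm0 mul0r.
have Nz0 := knorm_gt0 Sz z0; pose t := r / (2 * N z).
have t0 : 0 < t by rewrite divr_gt0 ?mulr_gt0.
have Stz := subspaceZ S_subspace t%:C%C Sz.
have tNz : t * N z = r / 2 by rewrite /t; field; rewrite gt_eqF.
have [||v [Sv Nv] tzv] := small _ Stz _ (t * N z / 2).
- by rewrite knormZr ?ltW // tNz; lra.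
- by rewrite tNz; lra.
have ti0 : 0 <= t^-1 by rewrite invr_ge0 ltW.
exists (t^-1%:C%C *: v).
  split; first exact: subspaceZ.
  rewrite knormZr //; apply: le_trans (ler_wpM2l ti0 Nv) _.
  suff -> : t^-1 * (2 * n%:R) = 4 * n%:R / r * N z by [].
  by rewrite /t invf_div; field; rewrite gt_eqF.
have -> : z - U (t^-1%:C%C *: v) = t^-1%:C%C *: (t%:C%C *: z - U v).
  rewrite (linear_onZ S_subspace U_linear) // scalerBr scalerA -rmorphM /=.
  by rewrite mulVf ?gt_eqF // scale1r.
rewrite knormZr //; last by apply: subspaceB => //; apply: U_in.
apply: le_trans (ler_wpM2l ti0 (ltW tzv)) _.
by rewrite mulrA mulKf ?gt_eqF.
Qed.

Lemma bounded_inverse : k_bounded_linear_on S N Ui.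
Proof.
have [Ui_in [UiU UUi]] := Ui_inverse; have [K K0 approx] := approx_preimage.
split => //; split.
  move=> a x y Sx Sy; have [Sx' Sy'] := (Ui_in _ Sx, Ui_in _ Sy).
  have -> : a *: x + y = U (a *: Ui x + Ui y) by rewrite U_linear ?UUi.
  by rewrite UiU //; apply: subspaceD => //; apply: subspaceZ.
exists (2 * K) => y Sy; have [q Sq [<- Nq]] := exact_preimage K0 approx y Sy.
by rewrite UiU.
Qed.

End BoundedInverse.

Section OrthonormalBasis.
Context {I : choiceType} {e : I -> V}.
Hypothesis e_onb : k_orthonormal_basis S ip e.

Let e_in : forall n, S (e n) := e_onb.1.
Let e_orthonormal : forall n m, ip (e n) (e m) = (n == m)%:R := e_onb.2.1.

Definition lincomb (s : seq I) (a : I -> R[i]) : V := \sum_(i <- s) a i *: e i.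

Lemma lincomb_in s a : S (lincomb s a).
Proof. by apply: subspace_sum => // i; apply: subspaceZ. Qed.

Lemma lincomb_cat s t a : lincomb (s ++ t) a = lincomb s a + lincomb t a.
Proof. exact: big_cat. Qed.

Lemma ip_lincomb_e s a m : uniq s ->
  ip (lincomb s a) (e m) = if m \in s then a m else 0.
Proof.
move=> us; rewrite ip_suml; under eq_bigr do rewrite ipZl e_orthonormal mulr_natr mulrb.
rewrite -big_mkcond; case: ifP => ms; first by rewrite -big_filter filter_pred1_uniq // big_seq1.
by rewrite big1_seq // => i /andP[/eqP-> im]; rewrite im in ms.
Qed.

Lemma knorm_lincomb s a : uniq s ->
  N (lincomb s a) ^+ 2 = \sum_(i <- s) Normc.normc (a i) ^+ 2.
Proof.
move=> us; have Ss := lincomb_in s a.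
apply: complexI; rewrite knorm_sqrC // rmorph_sum ip_suml.
rewrite big_seq_cond [RHS]big_seq_cond; apply: eq_bigr => i /andP[si _].
by rewrite ipZl ipC ip_lincomb_e // si -normc_sqrC.
Qed.

Lemma bessel_identity {g s} : S g -> uniq s ->
  N g ^+ 2 = N (g - lincomb s (fun i => ip g (e i))) ^+ 2 +
             \sum_(i <- s) Normc.normc (ip g (e i)) ^+ 2.
Proof.
move=> Sg us; set c := fun i => ip g (e i); set y := lincomb s c.
have Sy : S y := lincomb_in s c; have Sgy : S (g - y) := subspaceB S_subspace Sg Sy.
have orth : ip (g - y) y = 0.
  rewrite ip_sumr big_seq_cond big1 // => i /andP[si _].
  by rewrite ipZr ipBl ip_lincomb_e // si subrr mulr0.
by rewrite -knorm_lincomb // -knormD_orth // subrK.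
Qed.

Lemma bessel {g s} : S g -> uniq s ->
  \sum_(i <- s) Normc.normc (ip g (e i)) ^+ 2 <= N g ^+ 2.
Proof. by move=> Sg us; rewrite (bessel_identity Sg us) lerDr exprn_ge0 ?knorm_ge0. Qed.

Lemma lincomb_exhaustion {a : I -> R[i]} {C : R} :
  (forall s, uniq s -> \sum_(i <- s) Normc.normc (a i) ^+ 2 <= C) ->
  exists G : nat -> seq I, exists2 y, S y & forall k, [/\ uniq (G k),
    N (lincomb (G k) a - y) <= 2 * (2 ^+ k)^-1 &
    forall m, m \notin G k -> Normc.normc (a m) <= (2 ^+ k)^-1].
Proof.
move=> aC; have sq_ge0 i : 0 <= Normc.normc (a i) ^+ 2 by rewrite exprn_ge0 ?normc_ge0.
have [G chain] := exhausting_chain sq_ge0 aC.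
pose d k : R := (2 ^+ k)^-1; have d_ge0 k : 0 <= d k by rewrite invr_ge0 exprn_ge0.
have tail_le k s : uniq s -> ~~ has (mem (G k)) s -> N (lincomb s a) <= d k.
  move=> us sG; rewrite -(@ler_pXn2r _ 2) ?nnegrE ?knorm_ge0 // knorm_lincomb //.
  by case: (chain k) => _ _; apply.
have u_step k : N (lincomb (G k.+1) a - lincomb (G k) a) <= d k.
  have [_ [t Gt] _] := chain k; have [+ _ _] := chain k.+1.
  by rewrite Gt lincomb_cat addrC addKr cat_uniq => /and3P[_ tG ut]; apply: tail_le.
have d_half k : d k.+1 <= d k / 2 by rewrite /d exprS invfM mulrC.
have [y Sy G_y] := geometric_cvg (fun k => lincomb_in (G k) a) d_half u_step.
exists G, y => // k; have [uG _ Gtail] := chain k; split => // m mG.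
rewrite -(@ler_pXn2r _ 2) ?nnegrE ?normc_ge0 ?invr_ge0 ?exprn_ge0 //.
by have := Gtail [:: m] isT; rewrite big_seq1 /= orbF (negbTE mG); apply.
Qed.

Lemma lincomb_synthesis {a : I -> R[i]} {C : R} :
  (forall s, uniq s -> \sum_(i <- s) Normc.normc (a i) ^+ 2 <= C) ->
  exists2 y, S y & (forall m, ip y (e m) = a m) /\
    (forall eps, 0 < eps -> exists2 s, uniq s & N (y - lincomb s a) < eps).
Proof.
move=> /lincomb_exhaustion[G [y Sy G_y]]; exists y => //; split; last first.
  move=> eps eps0; have [k k_eps] := geometric_lt 2 eps eps0.
  have [uG yG _] := G_y k; exists (G k) => //.
  by rewrite (knorm_distC Sy (lincomb_in (G k) a)); apply: le_lt_trans yG k_eps.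
move=> m; apply/eqP; rewrite -subr_eq0; apply/eqP/Normc.eq0_normc.
apply: (@le0_geometric _ _ 3 (normc_ge0 _)) => k; have [uG yG am] := G_y k.
have Se := e_in m; have SGk := lincomb_in (G k) a.
have coef : Normc.normc (ip (lincomb (G k) a) (e m) - a m) <= (2 ^+ k)^-1.
  rewrite ip_lincomb_e //; case: ifP => mG; last by rewrite sub0r normcN am ?mG.
  by rewrite subrr Normc.normc0 invr_ge0 exprn_ge0.
have := cauchy_schwarz (subspaceB S_subspace Sy SGk) Se.
rewrite /k_norm e_orthonormal eqxx Normc.normc1 sqrtr1 mulr1 -/(k_norm ip _) ipBl.
rewrite (knorm_distC Sy SGk) => close.
have -> : ip y (e m) - a m =
    (ip y (e m) - ip (lincomb (G k) a) (e m)) + (ip (lincomb (G k) a) (e m) - a m).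
  by rewrite addrA subrK.
by apply: le_trans (le_normcD _ _) _; lra.
Qed.

Let e_total : forall x, S x -> (forall n, ip x (e n) = 0) -> x = 0 := e_onb.2.2.

Lemma fourier_expansion {g} : S g -> forall eps, 0 < eps ->
  exists2 s, uniq s & N (g - lincomb s (fun i => ip g (e i))) < eps.
Proof.
move=> Sg eps eps0.
have [y Sy [y_coef y_approx]] := lincomb_synthesis (fun s us => bessel Sg us).
suff gy : g = y by rewrite {1}gy; apply: y_approx.
apply/eqP; rewrite -subr_eq0; apply/eqP/e_total; first exact: subspaceB.
by move=> n; rewrite ipBl y_coef subrr.
Qed.

Lemma parseval {g} : S g ->
  \esum_(i in [set: I]) (Normc.normc (ip g (e i)) ^+ 2)%:E = (N g ^+ 2)%:E.
Proof.
move=> Sg; have sq_ge0 i : 0 <= Normc.normc (ip g (e i)) ^+ 2.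
  by rewrite exprn_ge0 ?normc_ge0.
apply/eqP; rewrite eq_le esum_le_fin //=; last by move=> s us; apply: bessel.
apply: fin_le_esum => // eps eps0.
have sqrt_eps_gt0 : 0 < Num.sqrt eps by rewrite sqrtr_gt0.
have [s us close] := fourier_expansion Sg _ sqrt_eps_gt0.
exists s => //; rewrite (bessel_identity Sg us) lerBlDr [X in _ <= X]addrC lerD2r.
by rewrite ltW // -(sqr_sqrtr (ltW eps0)) ltr_pXn2r ?nnegrE ?knorm_ge0 ?sqrtr_ge0.
Qed.

(* Functionals take values in R[i]^o, i.e. R[i] seen as a module over itself. *)
Section BoundedFunctional.
Variables (phi : V -> R[i]^o) (M : R).
Hypothesis phi_linear : forall a x y, S x -> S y -> phi (a *: x + y) = a *: phi x + phi y.
Hypothesis phi_bounded : forall x, S x -> Normc.normc (phi x) <= M * N x.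

Lemma functional_lincomb s a : phi (lincomb s a) = \sum_(i <- s) a i * phi (e i).
Proof.
rewrite (linear_on_sum S_subspace phi_linear) => [|i]; last exact: subspaceZ.
by apply: eq_bigr => i _; rewrite (linear_onZ S_subspace phi_linear).
Qed.

Lemma functional_basis_eq0 : (forall n, phi (e n) = 0) -> forall v, S v -> phi v = 0.
Proof.
move=> phi_e v Sv; apply/Normc.eq0_normc/eqP; rewrite eq_le normc_ge0 andbT.
apply: (@le0_mul_eps _ _ `|M|) => // eps eps0.
have [s _ close] := fourier_expansion Sv _ eps0.
set y := lincomb s _ in close; have Sy : S y := lincomb_in s _.
have Svy : S (v - y) := subspaceB S_subspace Sv Sy.
have -> : phi v = phi (v - y).
  rewrite (linear_onB S_subspace phi_linear) // functional_lincomb big1 ?subr0 //.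
  by move=> i _; rewrite phi_e mulr0.
apply: le_trans (phi_bounded _ Svy) _.
apply: le_trans (ler_wpM2r (knorm_ge0 _) (ler_norm M)) _.
by apply: ler_wpM2l; [exact: normr_ge0 | exact: ltW].
Qed.

End BoundedFunctional.

Lemma riesz_representation (phi : V -> R[i]^o) (M : R) :
  (forall a x y, S x -> S y -> phi (a *: x + y) = a *: phi x + phi y) ->
  (forall x, S x -> Normc.normc (phi x) <= M * N x) ->
  exists2 k, S k & forall v, S v -> phi v = ip v k.
Proof.
(* The representing vector has the coefficients (phi (e i))^*, which are square
   summable because phi (lincomb s a) = ||lincomb s a||^2. *)
move=> phi_linear phi_bounded; pose a i := (phi (e i))^*.
have a_bounded s : uniq s -> \sum_(i <- s) Normc.normc (a i) ^+ 2 <= M ^+ 2.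
  move=> us; rewrite -knorm_lincomb //; set x := lincomb s a.
  have Sx : S x := lincomb_in s a.
  have phi_x : phi x = (N x ^+ 2)%:C%C.
    rewrite functional_lincomb // knorm_sqrC // {2}/x ip_suml.
    rewrite big_seq_cond [RHS]big_seq_cond; apply: eq_bigr => i /andP[si _].
    by rewrite ipZl ipC ip_lincomb_e // si /a conjCK.
  have := phi_bounded _ Sx; rewrite phi_x normc_real ?exprn_ge0 ?knorm_ge0 //.
  by have := knorm_ge0 x; nra.
have [k Sk [k_coef _]] := lincomb_synthesis a_bounded.
exists k => // v Sv; apply/eqP; rewrite -subr_eq0; apply/eqP; move: v Sv.
apply: (@functional_basis_eq0 (fun v => phi v - ip v k) (M + N k)).
- by move=> b x y Sx Sy /=; rewrite phi_linear // ipL /GRing.scale /=; ring.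
- move=> x Sx; apply: le_trans (le_normcD _ _) _; rewrite normcN mulrDl.
  by apply: lerD; [apply: phi_bounded | rewrite mulrC cauchy_schwarz].
- by move=> n; rewrite ipC k_coef /a conjCK subrr.
Qed.

Lemma adjoint_exists {T} : k_bounded_linear_on S N T -> exists Ts, adjoint_on T Ts.
Proof.
move=> T_bounded; have [T_in [T_linear _]] := T_bounded.
have rep y : exists k, S y -> S k /\ forall x, S x -> ip (T x) y = ip x k.
  have [Sy|] := pselect (S y); last by exists y.
  have [|x Sx|k Sk Tk] := @riesz_representation (fun x => ip (T x) y) (k_opnorm S N T * N y).
  - by move=> a x z Sx Sz /=; rewrite T_linear // ipL.
  - apply: le_trans (cauchy_schwarz (T_in _ Sx) Sy) _.
    by rewrite mulrAC ler_wpM2r ?knorm_ge0 // knorm_op_le.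
  by exists k.
have [Ts Ts_rep] := choice rep; exists Ts; split => [y Sy|x y Sx Sy].
  by case: (Ts_rep y Sy).
by case: (Ts_rep y Sy) => _ ->.
Qed.

Lemma coef_sum_adjoint U Us f : adjoint_on U Us -> S f ->
  k_coef_sum ip (fun n => U (e n)) f = (N (Us f) ^+ 2)%:E.
Proof.
move=> [Us_in UUs] Sf; rewrite /k_coef_sum -(parseval (Us_in _ Sf)).
by apply: eq_esum => n _; rewrite ipC UUs // -ipC.
Qed.

Theorem frame_bounds {U Ui} : k_bounded_linear_on S N U -> k_inverse_on S U Ui ->
  let FS := k_coef_sum ip (fun n => U (e n)) in
  [/\ 0 < k_opnorm S N Ui ^- 2, 0 < k_opnorm S N U ^+ 2,
    forall A, k_lower_bound_on S N FS A <-> A <= k_opnorm S N Ui ^- 2 &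
    forall B, k_upper_bound_on S N FS B <-> k_opnorm S N U ^+ 2 <= B].
Proof.
move=> U_bounded U_inverse FS; have Ui_bounded := bounded_inverse U_bounded U_inverse.
have [Us U_adjoint] := adjoint_exists U_bounded.
have [Uis Ui_adjoint] := adjoint_exists Ui_bounded.
have Us_bounded := adjoint_bounded U_bounded U_adjoint.
have Uis_bounded := adjoint_bounded Ui_bounded Ui_adjoint.
have Us_inverse := adjoint_inverse U_bounded.1 U_inverse U_adjoint Ui_adjoint.
have FS_E f : S f -> FS f = (N (Us f) ^+ 2)%:E by apply: coef_sum_adjoint.
rewrite -(opnorm_adjoint U_bounded U_adjoint) -(opnorm_adjoint Ui_bounded Ui_adjoint).
split.
- have Uis_inverse := inverse_on_sym Us_bounded.1 Us_inverse.
  by rewrite invr_gt0 exprn_gt0 // (opnorm_gt0_inverse Uis_bounded Uis_inverse).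
- by rewrite exprn_gt0 // (opnorm_gt0_inverse Us_bounded Us_inverse).
- move=> A; rewrite -(sqr_lower_bound_iff A Us_bounded Uis_bounded Us_inverse).
  by split=> bound f Sf; have := bound f Sf; rewrite FS_E // lee_fin.
- move=> B; rewrite -(sqr_upper_bound_iff B Us_bounded).
  by split=> bound f Sf; have := bound f Sf; rewrite FS_E // lee_fin.
Qed.

End OrthonormalBasis.

End InnerProduct.

Section NegatedForm.
Context {R : realType} {V : lmodType R[i]} {form : V -> V -> R[i]}.

Lemma hermitian_sesquilinearN : k_hermitian_sesquilinear form ->
  k_hermitian_sesquilinear (fun x y => - form x y).
Proof.
move=> [formL formC]; split => [a x y z|x y]; first by rewrite formL opprD mulrN.
by rewrite formC rmorphN.
Qed.

Lemma k_normN : k_norm (fun x y => - form x y) = k_norm form.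
Proof. by apply: funext => x; rewrite /k_norm normcN. Qed.

Lemma k_coef_sumN (I : choiceType) (g : I -> V) :
  k_coef_sum (fun x y => - form x y) g = k_coef_sum form g.
Proof. by apply: funext => f; apply: eq_esum => n _; rewrite normcN. Qed.

End NegatedForm.

Theorem theorem3p4 (R : realType) (V : lmodType R[i]) (form : V -> V -> R[i])
  (Kp Km : set V) (Ip Im : choiceType) (ep : Ip -> V) (em : Im -> V)
  (Up Um Upi Umi : V -> V) :
  k_krein_space form Kp Km ->
  k_orthonormal_basis Kp form ep ->
  k_orthonormal_basis Km (fun x y => - form x y) em ->
  k_bounded_linear_on Kp (k_norm form) Up -> k_bijective_on Kp Up ->
  k_bounded_linear_on Km (k_norm form) Um -> k_bijective_on Km Um ->
  k_inverse_on Kp Up Upi -> k_inverse_on Km Um Umi ->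
  let fp := fun n => Up (ep n) in
  let fm := fun n => Um (em n) in
  (exists A B A' B' : R, [/\ 0 < A, 0 < B, 0 < A' & 0 < B'] /\
     (forall f, Kp f ->
        ((A * k_norm form f ^+ 2)%:E <= k_coef_sum form fp f)%E /\
        (k_coef_sum form fp f <= (B * k_norm form f ^+ 2)%:E)%E) /\
     (forall f, Km f ->
        ((A' * k_norm form f ^+ 2)%:E <= k_coef_sum form fm f)%E /\
        (k_coef_sum form fm f <= (B' * k_norm form f ^+ 2)%:E)%E)) /\
  (* largest possible A is 1 / ||(U+)^-1||^2 *)
  (k_lower_bound_on Kp (k_norm form) (k_coef_sum form fp)
      ((k_opnorm Kp (k_norm form) Upi) ^- 2) /\
   forall A, k_lower_bound_on Kp (k_norm form) (k_coef_sum form fp) A ->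
      A <= (k_opnorm Kp (k_norm form) Upi) ^- 2) /\
  (* largest possible A' is 1 / ||(U-)^-1||^2 *)
  (k_lower_bound_on Km (k_norm form) (k_coef_sum form fm)
      ((k_opnorm Km (k_norm form) Umi) ^- 2) /\
   forall A', k_lower_bound_on Km (k_norm form) (k_coef_sum form fm) A' ->
      A' <= (k_opnorm Km (k_norm form) Umi) ^- 2) /\
  (* smallest possible B is ||U+||^2 *)
  (k_upper_bound_on Kp (k_norm form) (k_coef_sum form fp)
      ((k_opnorm Kp (k_norm form) Up) ^+ 2) /\
   forall B, k_upper_bound_on Kp (k_norm form) (k_coef_sum form fp) B ->
      (k_opnorm Kp (k_norm form) Up) ^+ 2 <= B) /\
  (* smallest possible B' is ||U-||^2 *)
  (k_upper_bound_on Km (k_norm form) (k_coef_sum form fm)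
      ((k_opnorm Km (k_norm form) Um) ^+ 2) /\
   forall B', k_upper_bound_on Km (k_norm form) (k_coef_sum form fm) B' ->
      (k_opnorm Km (k_norm form) Um) ^+ 2 <= B').
Proof.
move=> [form_herm [_ [_ [_ [[Kp_sub [Kp_pos Kp_complete]]
  [[Km_sub [Km_pos Km_complete]] [Kp_nontrivial Km_nontrivial]]]]]]]
  ep_onb em_onb Up_bounded _ Um_bounded _ Upi_inverse Umi_inverse fp fm.
have [Ap_gt0 Bp_gt0 lowerp upperp] :=
  frame_bounds form_herm Kp_sub Kp_pos Kp_complete Kp_nontrivial ep_onb Up_bounded Upi_inverse.
rewrite -k_normN in Um_bounded.
have := frame_bounds (hermitian_sesquilinearN form_herm) Km_sub Km_pos Km_complete
  Km_nontrivial em_onb Um_bounded Umi_inverse.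
rewrite /= k_normN k_coef_sumN => -[Am_gt0 Bm_gt0 lowerm upperm].
have [lbp ubp] := ((lowerp _).2 (lexx _), (upperp _).2 (lexx _)).
have [lbm ubm] := ((lowerm _).2 (lexx _), (upperm _).2 (lexx _)).
split; last by do !split => //;
  [move=> ? /lowerp | move=> ? /lowerm | move=> ? /upperp | move=> ? /upperm].
exists (k_opnorm Kp (k_norm form) Upi ^- 2), (k_opnorm Kp (k_norm form) Up ^+ 2),
  (k_opnorm Km (k_norm form) Umi ^- 2), (k_opnorm Km (k_norm form) Um ^+ 2).
by split => //; split=> f Sf; split; [exact: lbp | exact: ubp | exact: lbm | exact: ubm].
Qed.
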